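(* Assume $(\hat f^{(i)})_{i\in[M+1]}$, $\hat f^{(i)}\in\mathbb{R}^{m_i}$, is an optimal solution of the Lagrange dual problem $\max L$. Put $\hat u^{(i)}=\exp(\hat f^{(i)}/\epsilon)$ (componentwise) for $i\in[M+1]$. Then the matrices \[ \hat P^{(i)}=\mathrm{diag}(\hat u^{(i)})K^{(i)}\mathrm{diag}(\mathbf 1_{m_{i+1}}/\hat u^{(i+1)})\ (i\in[M-1]),\qquad \hat P^{(M)}=\mathrm{diag}(\hat u^{(M)})K^{(M)}\mathrm{diag}(\hat u^{(M+1)}) \] form an optimal solution (in particular a feasible one) of the regularized sequentially composed optimal transport problem.
   Context: Fix $M\ge2$, positive integers $m_1,\dots,m_{M+1}$, cost matrices $C^{(i)}\in\mathbb{R}_{\ge0}^{m_i\times m_{i+1}}$, probability vectors $a\in\mathbb{R}^{m_1}$, $b\in\mathbb{R}^{m_{M+1}}$, $\epsilon>0$, Gibbs kernels $K^{(i)}_{jk}=\exp(-C^{(i)}_{jk}/\epsilon)$. The regularized sequentially composed OT problem: minimize $\sum_{i=1}^M(\langle C^{(i)},P^{(i)}\rangle-\epsilon H(P^{(i)}))$ over $P^{(i)}\in\mathbb{R}_{\ge0}^{m_i\times m_{i+1}}$ subject to $P^{(1)}\mathbf 1=a$, $(P^{(M)})^\top\mathbf 1=b$, $(P^{(i)})^\top\mathbf 1=P^{(i+1)}\mathbf 1$ for $i\in[M-1]$, with $H(P)=-\sum P_{jk}(\log P_{jk}-1)$. Its Lagrange dual is to maximize over $f^{(i)}\in\mathbb{R}^{m_i}$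 \[ L((f^{(i)})_i)=\langle f^{(1)},a\rangle+\langle f^{(M+1)},b\rangle-\epsilon\Big(\sum_{j,k}\exp\big((f^{(M)}_j+f^{(M+1)}_k-C^{(M)}_{jk})/\epsilon\big)+\sum_{i=1}^{M-1}\sum_{j,k}\exp\big((f^{(i)}_j-f^{(i+1)}_k-C^{(i)}_{jk})/\epsilon\big)\Big). \] *)

From HB Require Import structures.
From mathcomp Require Import all_boot all_order all_algebra.
From mathcomp Require Import all_classical all_reals.
From mathcomp Require Import sequences exp.
Set Implicit Arguments. Unset Strict Implicit. Unset Printing Implicit Defensive.
Import Order.TTheory GRing.Theory Num.Theory.
Local Open Scope ring_scope.

(* Conventions: the paper's index i in [M+1] = {1,...,M+1} is shifted to
   i - 1 in {0,...,M}.  Entries at other indices are irrelevant.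
   M >= 2 is encoded as M = N.+2 so that the dimensions of the last cost
   matrix (m N.+1, m N.+2) match those of f^{(M+1)} = f N.+2 definitionally. *)

Section Defs.
Variable R : realType.

Definition ent_term (x : R) : R := if x == 0 then 0 else x * (ln x - 1).

Definition entropy (p q : nat) (P : 'M[R]_(p, q)) : R :=
  - \sum_(j < p) \sum_(k < q) ent_term (P j k).

Definition frob (p q : nat) (A B : 'M[R]_(p, q)) : R :=
  \sum_(j < p) \sum_(k < q) A j k * B j k.

Definition ones (p : nat) : 'cV[R]_p := const_mx 1.

Definition prob_vec (p : nat) (v : 'cV[R]_p) : Prop :=
  (forall j, 0 <= v j 0) /\ \sum_(j < p) v j 0 = 1.

Definition gibbs (eps : R) (p q : nat) (C : 'M[R]_(p, q)) : 'M[R]_(p, q) :=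
  map_mx (fun c => expR (- c / eps)) C.

Definition primal_obj (M : nat) (m : nat -> nat) (eps : R)
  (C P : forall i : nat, 'M[R]_(m i, m i.+1)) : R :=
  \sum_(i < M) (frob (C i) (P i) - eps * entropy (P i)).

Definition feasible (N : nat) (m : nat -> nat)
  (a : 'cV[R]_(m 0)) (b : 'cV[R]_(m N.+2))
  (P : forall i : nat, 'M[R]_(m i, m i.+1)) : Prop :=
  [/\ (forall i : nat, (i < N.+2)%N -> forall j k, 0 <= P i j k),
      P 0%N *m ones _ = a,
      (P N.+1)^T *m ones _ = b &
      (forall i : nat, (i < N.+1)%N -> (P i)^T *m ones _ = P i.+1 *m ones _)].

Definition primal_optimal (N : nat) (m : nat -> nat) (eps : R)
  (C : forall i : nat, 'M[R]_(m i, m i.+1))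
  (a : 'cV[R]_(m 0)) (b : 'cV[R]_(m N.+2))
  (P : forall i : nat, 'M[R]_(m i, m i.+1)) : Prop :=
  feasible a b P /\
  forall Q : forall i : nat, 'M[R]_(m i, m i.+1),
    feasible a b Q -> primal_obj N.+2 eps C P <= primal_obj N.+2 eps C Q.

Definition dual_L (N : nat) (m : nat -> nat) (eps : R)
  (C : forall i : nat, 'M[R]_(m i, m i.+1))
  (a : 'cV[R]_(m 0)) (b : 'cV[R]_(m N.+2))
  (f : forall i : nat, 'cV[R]_(m i)) : R :=
  \sum_(j < m 0%N) f 0%N j 0 * a j 0 + \sum_(k < m N.+2) f N.+2 k 0 * b k 0
  - eps * (\sum_(j < m N.+1) \sum_(k < m N.+2)
             expR ((f N.+1 j 0 + f N.+2 k 0 - C N.+1 j k) / eps)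
           + \sum_(i < N.+1) \sum_(j < m i) \sum_(k < m i.+1)
             expR ((f i j 0 - f i.+1 k 0 - C i j k) / eps)).

Definition scaling (eps : R) (p : nat) (f : 'cV[R]_p) : 'cV[R]_p :=
  map_mx (fun x => expR (x / eps)) f.

Definition plan_of_dual (N : nat) (m : nat -> nat) (eps : R)
  (C : forall i : nat, 'M[R]_(m i, m i.+1))
  (f : forall i : nat, 'cV[R]_(m i)) (i : nat) : 'M[R]_(m i, m i.+1) :=
  let u := fun l => scaling eps (f l) in
  if i == N.+1 then
    diag_mx (u i)^T *m gibbs eps (C i) *m diag_mx (u i.+1)^T
  else
    diag_mx (u i)^T *m gibbs eps (C i) *m diag_mx (map_mx (fun x => x^-1) (u i.+1))^T.

End Defs.

From HB Require Import structures.
From mathcomp Require Import all_boot all_order all_algebra.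
From mathcomp Require Import all_classical all_reals.
From mathcomp Require Import sequences exp.
From mathcomp Require Import ring lra.
Set Implicit Arguments. Unset Strict Implicit. Unset Printing Implicit Defensive.
Import Order.TTheory GRing.Theory Num.Theory.
Local Open Scope ring_scope.

(* The dual function is L(f) = <f^(1), a> + <f^(M+1), b> - eps * (total mass of
   the plan P(f) built from f).  Summation by parts along the chain of layers
   shows that for a feasible Q this linear part equals sum_i <Q^(i), G^(i)(f)>,
   where G^(i)(f)_jk is the exponent of the Gibbs factor of P(f) without the
   cost.  The entrywise Fenchel-Young inequality
   g q - eps e^((g-c)/eps) <= c q + eps q (log q - 1), an equality at
   q = e^((g-c)/eps), then gives weak duality L(f) <= primal(Q), with equality
   for Q = P(f) once P(f) is feasible.  Feasibility of P(fhat) is first-order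
   optimality: shifting the potentials by t d changes L by
   t (<d, sources> - <d, net outflow of P(fhat)>) + O(t^2), and testing with
   unit vectors d yields the marginal and balance constraints. *)

Section RealFacts.
Variable R : realType.

Lemma expR_sub1_le (x : R) : x <= 1/2 -> expR x - 1 <= x + 2 * x ^+ 2.
Proof.
move=> hx; have ex := expR_gt0 x.
(* e^x <= 1/(1 - x) <= 1 + x + 2 x^2 as long as x <= 1/2. *)
have : 1 - x <= (expR x)^-1 by rewrite -expRN; have := expR_ge1Dx (- x); lra.
move/(ler_wpM2r (ltW ex)); rewrite mulVf ?gt_eqF // => h.
nra.
Qed.

Lemma eq0_of_le_sqr (d u c : R) : 0 < d ->
  (forall t, `|t| <= d -> u * t <= c * t ^+ 2) -> u = 0.
Proof.
move=> hd H; apply/eqP; apply: contraT => hu.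
have u2 : 0 < u ^+ 2 by rewrite exprn_even_gt0 // hu orbT.
set D := `|u| + d * (`|c| + 1).
have hD : 0 < D by rewrite /D; have := normr_ge0 u; have := normr_ge0 c; nra.
set e := d / D.
(* [t := u e] with [|u e| <= d] and [c e < 1] contradicts [u^2 e <= c u^2 e^2]. *)
have eD : e * D = d by rewrite /e mulfVK ?gt_eqF.
have he : 0 < e by rewrite divr_gt0.
have dc : 0 <= d * (`|c| + 1) by apply: mulr_ge0 (ltW hd) _; apply: addr_ge0.
have hue : `|u * e| <= d.
  by rewrite normrM (gtr0_norm he) -eD /D [_ * e]mulrC ler_pM2l // lerDl.
have hce : c * e < 1.
  have : e * (`|c| + 1) <= 1.
    rewrite -(ler_pM2l hd) mulr1; move: eD; rewrite /D.
    have : 0 <= e * `|u| by apply: mulr_ge0 (ltW he) _.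
    nra.
  have := ler_norm c; nra.
have : 0 < u ^+ 2 * e * (1 - c * e).
  by apply: mulr_gt0; [exact: mulr_gt0 | rewrite subr_gt0].
have := H _ hue; nra.
Qed.

Lemma fenchel_young (eps c g q : R) : 0 < eps -> 0 <= q ->
  g * q - eps * expR ((g - c) / eps) <= c * q + eps * ent_term q.
Proof.
move=> heps hq; rewrite /ent_term.
set x := (g - c) / eps.
have -> : g = c + eps * x by rewrite /x mulrC divfK ?gt_eqF //; ring.
have ex := expR_gt0 x.
case: eqP => [->|/eqP q0]; first by rewrite !mulr0 addr0 subr_le0 pmulr_rge0 // ltW.
have qp : 0 < q by rewrite lt_def q0.
have : q * (1 + (x - ln q)) <= expR x.
  have -> : expR x = q * expR (x - ln q).
    by rewrite expRB lnK ?posrE // mulrC divfK ?gt_eqF.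
  by rewrite ler_pM2l // expR_ge1Dx.
by rewrite -(ler_pM2l heps); nra.
Qed.

Lemma fenchel_young_eq (eps c g : R) (q := expR ((g - c) / eps)) : 0 < eps ->
  g * q - eps * expR ((g - c) / eps) = c * q + eps * ent_term q.
Proof.
move=> heps; rewrite /ent_term /q expR_eq0 expRK.
set x := (g - c) / eps.
have -> : g = c + eps * x by rewrite /x mulrC divfK ?gt_eqF //; ring.
ring.
Qed.

End RealFacts.

Section Duality.
Variables (R : realType) (N : nat) (m : nat -> nat) (eps : R).
Variables (C : forall i : nat, 'M[R]_(m i, m i.+1)).
Variables (a : 'cV[R]_(m 0%N)) (b : 'cV[R]_(m N.+2)).
Hypothesis heps : 0 < eps.

Local Notation potentials := (forall i : nat, 'cV[R]_(m i)).
Local Notation plans := (forall i : nat, 'M[R]_(m i, m i.+1)).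
Local Notation entries := (forall i : nat, 'I_(m i) -> 'I_(m i.+1) -> R).

(* The sign flip on the last layer is that of the paper's dual function. *)
Definition layer_pot (f : potentials) (i : nat) (j : 'I_(m i)) (k : 'I_(m i.+1)) : R :=
  if i == N.+1 then f i j 0 + f i.+1 k 0 else f i j 0 - f i.+1 k 0.
Arguments layer_pot f i j k : clear implicits.

Definition dual_lin (f : potentials) : R :=
  \sum_(j < m 0%N) f 0%N j 0 * a j 0 + \sum_(k < m N.+2) f N.+2 k 0 * b k 0.

Definition entry_sum (F : entries) : R :=
  \sum_(i < N.+2) \sum_j \sum_k F i j k.

Lemma layer_pot_inner f i (j : 'I_(m i)) (k : 'I_(m i.+1)) :
  i != N.+1 -> layer_pot f i j k = f i j 0 - f i.+1 k 0.
Proof. by move/negbTE; rewrite /layer_pot => ->. Qed.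

Lemma layer_pot_last f (j : 'I_(m N.+1)) (k : 'I_(m N.+2)) :
  layer_pot f N.+1 j k = f N.+1 j 0 + f N.+2 k 0.
Proof. by rewrite /layer_pot eqxx. Qed.

Lemma entry_sumD (F G : entries) :
  entry_sum (fun i j k => F i j k + G i j k) = entry_sum F + entry_sum G.
Proof.
rewrite /entry_sum -big_split; apply: eq_bigr => i _.
by rewrite -big_split; apply: eq_bigr => j _; rewrite -big_split.
Qed.

Lemma entry_sumB (F G : entries) :
  entry_sum (fun i j k => F i j k - G i j k) = entry_sum F - entry_sum G.
Proof.
rewrite /entry_sum -sumrB; apply: eq_bigr => i _.
by rewrite -sumrB; apply: eq_bigr => j _; rewrite -sumrB.
Qed.

Lemma entry_sumZ x (F : entries) :
  entry_sum (fun i j k => x * F i j k) = x * entry_sum F.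
Proof.
rewrite /entry_sum mulr_sumr; apply: eq_bigr => i _.
by rewrite mulr_sumr; apply: eq_bigr => j _; rewrite mulr_sumr.
Qed.

Lemma ler_entry_sum (F G : entries) :
  (forall (i : 'I_N.+2) j k, F i j k <= G i j k) -> entry_sum F <= entry_sum G.
Proof.
move=> FG; apply: ler_sum => i _; apply: ler_sum => j _; apply: ler_sum => k _.
exact: FG.
Qed.

Lemma primal_objE (Q : plans) : primal_obj N.+2 eps C Q =
  entry_sum (fun i j k => C i j k * Q i j k + eps * ent_term (Q i j k)).
Proof.
apply: eq_bigr => i _; rewrite /frob /entropy mulrN opprK mulr_sumr -big_split.
by apply: eq_bigr => j _; rewrite mulr_sumr -big_split.
Qed.

Lemma plan_of_dualE f i (j : 'I_(m i)) (k : 'I_(m i.+1)) :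
  plan_of_dual N eps C f i j k = expR ((layer_pot f i j k - C i j k) / eps).
Proof.
rewrite /plan_of_dual /layer_pot.
by case: eqP => _; rewrite mul_mx_diag mul_diag_mx !mxE -?expRN -!expRD;
  congr expR; ring.
Qed.

Lemma dual_L_plan f : dual_L eps C a b f =
  dual_lin f - eps * entry_sum (fun i j k => plan_of_dual N eps C f i j k).
Proof.
rewrite /dual_L /entry_sum [in RHS]big_ord_recr /= [in RHS]addrC.
congr (_ - eps * (_ + _)).
  apply: eq_bigr => j _; apply: eq_bigr => k _.
  by rewrite plan_of_dualE layer_pot_last.
apply: eq_bigr => i _; apply: eq_bigr => j _; apply: eq_bigr => k _.
by rewrite plan_of_dualE layer_pot_inner // neq_ltn ltn_ord.
Qed.

Lemma entry_sum_layer_pot (Q : plans) (f : potentials) :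
  entry_sum (fun i j k => Q i j k * layer_pot f i j k) =
  \sum_j f 0%N j 0 * \sum_k Q 0%N j k + \sum_k f N.+2 k 0 * \sum_j Q N.+1 j k
  + \sum_(i < N.+1) \sum_(n < m i.+1) f i.+1 n 0 * (\sum_k Q i.+1 n k - \sum_j Q i j n).
Proof.
pose A (i : nat) := \sum_(j < m i) f i j 0 * \sum_k Q i j k.
pose B (i : nat) := \sum_(k < m i.+1) f i.+1 k 0 * \sum_j Q i j k.
have layer i : \sum_j \sum_k Q i j k * layer_pot f i j k =
    A i + (if i == N.+1 then B i else - B i).
  have -> : A i = \sum_j \sum_k Q i j k * f i j 0.
    apply: eq_bigr => j _.
    by rewrite mulr_sumr; apply: eq_bigr => k _; rewrite mulrC.
  have -> : B i = \sum_j \sum_k Q i j k * f i.+1 k 0.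
    rewrite exchange_big; apply: eq_bigr => k _.
    by rewrite mulr_sumr; apply: eq_bigr => j _; rewrite mulrC.
  rewrite /layer_pot; case: eqP => _.
    rewrite -big_split; apply: eq_bigr => j _.
    by rewrite -big_split; apply: eq_bigr => k _; rewrite mulrDr.
  rewrite -sumrB; apply: eq_bigr => j _.
  by rewrite -sumrB; apply: eq_bigr => k _; rewrite mulrBr.
have interior i :
    \sum_(n < m i.+1) f i.+1 n 0 * (\sum_k Q i.+1 n k - \sum_j Q i j n) = A i.+1 - B i.
  by rewrite -sumrB; apply: eq_bigr => n _; rewrite mulrBr.
have tele : \sum_(i < N.+1) (A i - A i.+1) = A 0%N - A N.+1.
  rewrite -(big_mkord xpredT (fun i => A i - A i.+1)).
  rewrite (@telescope_sumr_eq _ _ _ (fun i => - A i)) //; first by rewrite opprK addrC.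
  by move=> k _; rewrite opprK addrC.
rewrite /entry_sum; under eq_bigr => i _ do rewrite layer.
rewrite big_ord_recr /= eqxx.
rewrite [X in _ = _ + X](eq_bigr (fun i : 'I_N.+1 => A i.+1 - B i));
  last by move=> i _; apply: interior.
under eq_bigr => i _ do rewrite ifN ?neq_ltn ?ltn_ord //.
have -> : \sum_(i < N.+1) (A i - B i) =
    \sum_(i < N.+1) (A i - A i.+1) + \sum_(i < N.+1) (A i.+1 - B i).
  by rewrite -big_split; apply: eq_bigr => i _ /=; rewrite addrA subrK.
rewrite tele /A /B; ring.
Qed.

Lemma mulmx_onesE p q (A : 'M[R]_(p, q)) (j : 'I_p) :
  (A *m ones R q) j 0 = \sum_k A j k.
Proof. by rewrite mxE; apply: eq_bigr => k _; rewrite mxE mulr1. Qed.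

Lemma trmx_mulmx_onesE p q (A : 'M[R]_(p, q)) (k : 'I_q) :
  (A^T *m ones R p) k 0 = \sum_j A j k.
Proof. by rewrite mxE; apply: eq_bigr => j _; rewrite !mxE mulr1. Qed.

Lemma feasible_entry_sum_layer_pot (Q : plans) f : feasible a b Q ->
  entry_sum (fun i j k => Q i j k * layer_pot f i j k) = dual_lin f.
Proof.
case=> _ Qa Qb Qbal; rewrite entry_sum_layer_pot [X in _ + X = _]big1 ?addr0.
  rewrite /dual_lin; congr (_ + _); apply: eq_bigr => j _.
    by rewrite -mulmx_onesE Qa.
  by rewrite -trmx_mulmx_onesE Qb.
move=> i _; apply: big1 => n _.
by rewrite -mulmx_onesE -trmx_mulmx_onesE (Qbal i (ltn_ord i)) subrr mulr0.
Qed.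

Lemma dual_le_primal f (Q : plans) : feasible a b Q ->
  dual_L eps C a b f <= primal_obj N.+2 eps C Q.
Proof.
move=> hQ; rewrite dual_L_plan -(feasible_entry_sum_layer_pot f hQ) -entry_sumZ.
rewrite -entry_sumB primal_objE; apply: ler_entry_sum => i j k.
case: hQ => Q0 _ _ _; rewrite plan_of_dualE mulrC.
exact: fenchel_young heps (Q0 i (ltn_ord i) j k).
Qed.

Lemma dual_eq_primal_plan f : feasible a b (plan_of_dual N eps C f) ->
  dual_L eps C a b f = primal_obj N.+2 eps C (plan_of_dual N eps C f).
Proof.
move=> hP; rewrite dual_L_plan -(feasible_entry_sum_layer_pot f hP) -entry_sumZ.
rewrite -entry_sumB primal_objE /entry_sum.
apply: eq_bigr => i _; apply: eq_bigr => j _; apply: eq_bigr => k _.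
by rewrite plan_of_dualE mulrC fenchel_young_eq.
Qed.

Definition pot_shift (f d : potentials) (t : R) : potentials :=
  fun l => f l + t *: d l.

Definition unit_pot (l0 n0 : nat) : potentials :=
  fun l => \col_j (if (l == l0) && (j == n0 :> nat) then 1 else 0).

Lemma layer_pot_shift f d t i (j : 'I_(m i)) (k : 'I_(m i.+1)) :
  layer_pot (pot_shift f d t) i j k = layer_pot f i j k + t * layer_pot d i j k.
Proof. by rewrite /layer_pot /pot_shift !mxE; case: eqP => _; ring. Qed.

Lemma dual_lin_shift f d t : dual_lin (pot_shift f d t) = dual_lin f + t * dual_lin d.
Proof.
rewrite /dual_lin mulrDr !mulr_sumr addrACA -!big_split.
by congr (_ + _); apply: eq_bigr => j _ /=; rewrite !mxE; ring.
Qed.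

Lemma plan_of_dual_shift f d t i (j : 'I_(m i)) (k : 'I_(m i.+1)) :
  plan_of_dual N eps C (pot_shift f d t) i j k =
  plan_of_dual N eps C f i j k * expR (t * layer_pot d i j k / eps).
Proof.
rewrite !plan_of_dualE layer_pot_shift -expRD -mulrDl.
by congr (expR (_ / _)); ring.
Qed.

Lemma layer_pot_norm (d : potentials) i (j : 'I_(m i)) (k : 'I_(m i.+1)) :
  (forall l (n : 'I_(m l)), `|d l n 0| <= 1) -> `|layer_pot d i j k| <= 2.
Proof.
move=> hd; have := hd i j; have := hd i.+1 k; rewrite /layer_pot; case: eqP => _.
  by have := ler_normD (d i j 0) (d i.+1 k 0); lra.
by have := ler_normB (d i j 0) (d i.+1 k 0); lra.
Qed.

Lemma unit_pot_norm l0 n0 l (n : 'I_(m l)) : `|unit_pot l0 n0 l n 0| <= 1.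
Proof. by rewrite mxE; case: ifP; rewrite ?normr1 ?normr0. Qed.

Lemma sum_unit_pot l0 (n0 : 'I_(m l0)) (F : 'I_(m l0) -> R) :
  \sum_j unit_pot l0 n0 l0 j 0 * F j = F n0.
Proof.
rewrite (bigD1 n0) //= mxE !eqxx mul1r big1 ?addr0 // => j /negbTE hj.
by rewrite mxE eqxx /= [_ == _]hj mul0r.
Qed.

Lemma sum_unit_pot_off l0 n0 l (F : 'I_(m l) -> R) :
  l != l0 -> \sum_j unit_pot l0 n0 l j 0 * F j = 0.
Proof. by move/negbTE=> hl; apply: big1 => j _; rewrite mxE hl mul0r. Qed.

Lemma sum_unit_pot_inner_off l0 n0 (X : forall i : 'I_N.+1, 'I_(m i.+1) -> R) :
  (forall i : 'I_N.+1, i.+1 != l0) ->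
  \sum_(i < N.+1) \sum_n unit_pot l0 n0 i.+1 n 0 * X i n = 0.
Proof. by move=> hl; apply: big1 => i _; rewrite sum_unit_pot_off. Qed.

Lemma sum_unit_pot_inner (i0 : 'I_N.+1) (n0 : 'I_(m i0.+1))
    (X : forall i : 'I_N.+1, 'I_(m i.+1) -> R) :
  \sum_(i < N.+1) \sum_n unit_pot i0.+1 n0 i.+1 n 0 * X i n = X i0 n0.
Proof.
rewrite (bigD1 i0) //= sum_unit_pot big1 ?addr0 // => i hne.
by rewrite sum_unit_pot_off // eqSS.
Qed.

Section Optimum.
Variable fhat : potentials.
Hypothesis hopt :
  forall f : potentials, dual_L eps C a b f <= dual_L eps C a b fhat.

Local Notation P := (plan_of_dual N eps C fhat).

Lemma dual_stationary (d : potentials) :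
  (forall l (n : 'I_(m l)), `|d l n 0| <= 1) ->
  dual_lin d = entry_sum (fun i j k => P i j k * layer_pot d i j k).
Proof.
move=> hd; set W := entry_sum _.
set S := entry_sum (fun i j k => P i j k).
have P0 i (j : 'I_(m i)) (k : 'I_(m i.+1)) : 0 <= P i j k.
  by rewrite plan_of_dualE expR_ge0.
have S0 : 0 <= S.
  by apply: sumr_ge0 => i _; apply: sumr_ge0 => j _; apply: sumr_ge0 => k _.
apply/eqP; rewrite -subr_eq0; apply/eqP.
apply: (@eq0_of_le_sqr _ (eps / 4) _ (8 / eps * S)) => [|t ht].
  by rewrite divr_gt0.
set E := entry_sum (fun i j k => P i j k * (expR (t * layer_pot d i j k / eps) - 1)).
have shiftE :
    entry_sum (fun i j k => plan_of_dual N eps C (pot_shift fhat d t) i j k) = S + E.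
  rewrite -entry_sumD; apply: eq_bigr => i _.
  apply: eq_bigr => j _; apply: eq_bigr => k _.
  by rewrite plan_of_dual_shift; ring.
have bound : E <= t / eps * W + 8 * t ^+ 2 / eps ^+ 2 * S.
  rewrite -!entry_sumZ -entry_sumD; apply: ler_entry_sum => i j k.
  set G := layer_pot d i j k.
  have hG : `|G| <= 2 := layer_pot_norm j k hd.
  have hx : `|t * G / eps| <= 1/2.
    rewrite normrM normfV normrM (gtr0_norm heps) ler_pdivrMr //.
    by have := normr_ge0 t; have := normr_ge0 G; nra.
  have x2 : (t * G / eps) ^+ 2 <= 4 * t ^+ 2 / eps ^+ 2.
    have -> : (t * G / eps) ^+ 2 = t ^+ 2 / eps ^+ 2 * G ^+ 2 by field; rewrite gt_eqF.
    rewrite [X in _ <= X](_ : _ = t ^+ 2 / eps ^+ 2 * 4); last by ring.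
    apply: ler_wpM2l; first by rewrite divr_ge0 ?sqr_ge0.
    by move: hG; rewrite ler_norml; nra.
  have := expR_sub1_le (le_trans (ler_norm _) hx).
  move/(ler_wpM2l (P0 i j k))/le_trans; apply.
  have -> : P i j k * (t * G / eps + 2 * (t * G / eps) ^+ 2) =
      t / eps * (P i j k * G) + 2 * (t * G / eps) ^+ 2 * P i j k by ring.
  by rewrite lerD2l ler_wpM2r //; lra.
have := hopt (pot_shift fhat d t).
rewrite !dual_L_plan dual_lin_shift shiftE -/S.
have := ler_pM2l heps E (t / eps * W + 8 * t ^+ 2 / eps ^+ 2 * S); rewrite bound.
have -> : eps * (t / eps * W + 8 * t ^+ 2 / eps ^+ 2 * S) =
    t * W + 8 / eps * S * t ^+ 2.
  by field; rewrite gt_eqF.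
lra.
Qed.

Lemma plan_of_dual_feasible : feasible a b P.
Proof.
have stat l0 (n0 : 'I_(m l0)) := dual_stationary (unit_pot_norm l0 n0).
split.
- by move=> i _ j k; rewrite plan_of_dualE expR_ge0.
- apply/matrixP => j0 z; rewrite (ord1 z) mulmx_onesE.
  move: (stat 0%N j0); rewrite entry_sum_layer_pot /dual_lin !sum_unit_pot.
  by rewrite !sum_unit_pot_off // sum_unit_pot_inner_off // !addr0.
- apply/matrixP => k0 z; rewrite (ord1 z) trmx_mulmx_onesE.
  move: (stat N.+2 k0); rewrite entry_sum_layer_pot /dual_lin !sum_unit_pot.
  rewrite !sum_unit_pot_off // sum_unit_pot_inner_off ?add0r ?addr0 // => i.
  by rewrite eqSS neq_ltn ltn_ord.
- move=> i hi; apply/matrixP => n0 z.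
  rewrite (ord1 z) trmx_mulmx_onesE mulmx_onesE.
  move: (stat i.+1 n0); rewrite entry_sum_layer_pot /dual_lin.
  rewrite (@sum_unit_pot_inner (Ordinal hi) n0).
  rewrite !sum_unit_pot_off ?add0r // ?eqSS ?neq_ltn ?hi ?orbT //.
  by move=> /esym/subr0_eq/esym balance; exact: balance.
Qed.

End Optimum.

End Duality.

Theorem mainTheorem3 (R : realType) (N : nat) (m : nat -> nat)
  (hm : forall i : nat, (i <= N.+2)%N -> (0 < m i)%N)
  (C : forall i : nat, 'M[R]_(m i, m i.+1))
  (hC : forall i : nat, (i < N.+2)%N -> forall j k, 0 <= C i j k)
  (a : 'cV[R]_(m 0%N)) (b : 'cV[R]_(m N.+2))
  (ha : prob_vec a) (hb : prob_vec b)
  (eps : R) (heps : 0 < eps)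
  (fhat : forall i : nat, 'cV[R]_(m i))
  (hopt : forall f : forall i : nat, 'cV[R]_(m i),
            dual_L eps C a b f <= dual_L eps C a b fhat) :
  primal_optimal eps C a b (plan_of_dual N eps C fhat).
Proof.
have feasP := plan_of_dual_feasible heps hopt.
split=> // Q hQ.
rewrite -(dual_eq_primal_plan heps feasP).
exact: dual_le_primal.
Qed.
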